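(* Let $g$ be an $n$-person no-sink WTT game form satisfying the standing assumptions below, and let $1\le k\le n$. Then $g$ contains no $k$-box.
   Context: Let $X_1,\dots,X_n$ and $A$ be finite nonempty sets. An $n$-person game form is a map $g: X_1\times\cdots\times X_n\to A$; elements of $X=X_1\times\cdots\times X_n$ are strategy profiles. For a direction $i\in[n]$ write $X_{-i}=\prod_{t\neq i}X_t$, and for $s\in X_i$, $y\in X_{-i}$ write $(s,y)$ for the profile with $i$-th coordinate $s$ and other coordinates $y$. The hyperplane perpendicular to direction $i$ at $s\in X_i$ is $H_s=\{x\in X: x_i=s\}$; for a profile $x$ write $H_i^x$ for the hyperplane perpendicular to direction $i$ containing $x$. $g$ is weakly totally tight (WTT) if for every $i\in[n]$, all $s\neq s'$ in $X_i$ and all $y\neq y'$ in $X_{-i}$, at least one of $g(s,y)=g(s,y')$, $g(s,y)=g(s',y)$, $g(s',y')=g(s',y)$, $g(s',y')=g(s,y')$ holds. A set $S\subseteq X$ is a constant region if there is $c\in A$ with $g(x)=c$ for all $x\in S$. For distinct $j,k\in X_i$, $H_j^{\neq}(k)=\{(j,y): y\in X_{-i},\ g(j,y)\neq g(k,y)\}$. We write $H_j\stackrel{c}{\longrightarrow}H_k$ if $g(x)=c$ for all $x\in H_j^{\neq}(k)$, and $H_j\stackrel{c}{\Longrightarrow}H_k$ if $H_j\stackrel{c}{\longrightarrow}H_k$ and there is no outcome $d$ with $H_k\stackrel{d}{\longrightarrow}H_j$. If there exist $k\in X_i\setminus\{j\}$ and $c$ with $H_j\stackrel{c}{\Longrightarrow}H_k$,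 $c$ is called the proper outcome of $H_j$ (for WTT $g$ it does not depend on $k$). We say an outcome $a$ is not the proper outcome of a hyperplane $H$ if $H$ has no proper outcome or its proper outcome differs from $a$. $H_j$ is a sink hyperplane if for every $k\in X_i\setminus\{j\}$ there is an outcome $c_k$ with $H_k\stackrel{c_k}{\longrightarrow}H_j$; $g$ is no-sink if there is no sink hyperplane in any direction. A WTT no-sink $g$ contains a $k$-box if there are profiles $x,y$ such that: $g(x)\neq g(y)$; $x$ and $y$ differ in exactly $k$ coordinates $i_1,\dots,i_k$; and for every $1\le t\le k$, $g(x)$ is not the proper outcome of $H_{i_t}^x$ and $g(y)$ is not the proper outcome of $H_{i_t}^y$. Standing assumptions: no hyperplane of $g$ is a constant region, and for every $i$ and distinct $j,k\in X_i$ there is $y\in X_{-i}$ with $g(j,y)\neq g(k,y)$. *)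

From HB Require Import structures.
From mathcomp Require Import all_boot.
Unset Printing Implicit Defensive.

Section GameForms.
Variables (n : nat) (X : 'I_n -> finType) (A : finType).

Definition profile := {dffun forall i : 'I_n, X i}.

(* (s, y): the profile y with its i-th coordinate replaced by s;
   y is a full profile whose i-th coordinate is ignored (it represents
   the element of X_{-i} obtained by forgetting coordinate i). *)
Definition upd (y : profile) (i : 'I_n) (s : X i) : profile :=
  [ffun j => @dfwith _ X (fun j => y j) i s j].

(* y and y' represent different elements of X_{-i} *)
Definition differ_off (i : 'I_n) (y y' : profile) : Prop :=
  exists j : 'I_n, j != i /\ y j != y' j.

Variable g : profile -> A.

Definition WTT : Prop :=
  forall (i : 'I_n) (s s' : X i) (y y' : profile),
    s != s' -> differ_off i y y' ->
    g (upd y i s) = g (upd y' i s) \/ g (upd y i s) = g (upd y i s') \/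
    g (upd y' i s') = g (upd y i s') \/ g (upd y' i s') = g (upd y' i s).

(* H_j --c--> H_k (direction i): every x in H_j^{<>}(k) has g x = c *)
Definition arrow (i : 'I_n) (j k : X i) (c : A) : Prop :=
  forall y : profile, g (upd y i j) != g (upd y i k) -> g (upd y i j) = c.

Definition darrow (i : 'I_n) (j k : X i) (c : A) : Prop :=
  arrow i j k c /\ ~ (exists d : A, arrow i k j d).

Definition proper_outcome (i : 'I_n) (j : X i) (c : A) : Prop :=
  exists k : X i, k != j /\ darrow i j k c.

Definition sink (i : 'I_n) (j : X i) : Prop :=
  forall k : X i, k != j -> exists c : A, arrow i k j c.

Definition no_sink : Prop := forall (i : 'I_n) (j : X i), ~ sink i j.

Definition no_constant_hyperplane : Prop :=
  forall (i : 'I_n) (s : X i), ~ (exists c : A, forall y : profile, g (upd y i s) = c).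

Definition distinct_hyperplanes_differ : Prop :=
  forall (i : 'I_n) (j k : X i), j != k ->
    exists y : profile, g (upd y i j) != g (upd y i k).

Definition contains_box (k : nat) : Prop :=
  exists x y : profile,
    g x != g y /\
    #|[set i : 'I_n | x i != y i]| = k /\
    (forall i : 'I_n, x i != y i ->
       ~ proper_outcome i (x i) (g x) /\ ~ proper_outcome i (y i) (g y)).

End GameForms.

Arguments upd {n X} y i s.
Arguments differ_off {n X} i y y'.
Arguments WTT {n X A} g.
Arguments arrow {n X A} g i j k c.
Arguments darrow {n X A} g i j k c.
Arguments proper_outcome {n X A} g i j c.
Arguments sink {n X A} g i j.
Arguments no_sink {n X A} g.
Arguments no_constant_hyperplane {n X A} g.
Arguments distinct_hyperplanes_differ {n X A} g.
Arguments contains_box {n X A} g k.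

From HB Require Import structures.
From mathcomp Require Import all_boot.
From Stdlib Require Import Classical.

(* WTT says that two profiles separating H_j from H_l agree
   on H_j or on H_l; hence between any two hyperplanes there is an arrow in at
   least one direction, and, since no hyperplane is a sink, every hyperplane has
   a proper outcome p, say H_j ==p==> H_m.  If moreover H_j --b--> H_l with
   b <> p, the separators of H_m and H_j force H_l --p--> H_j, and then
   H_l ==p==> H_m: so the outcomes on both sides of the arrow are proper.
   Now take a box x, y with as few differing coordinates as possible and a
   direction t where they differ.  Moving y_t to x_t in y (or x_t to y_t in x)
   must change the outcome, otherwise a smaller box appears; so y and x
   separate H_{y_t} from H_{x_t} with outcomes g y and g x that are not proper,
   contradicting the above whichever way the arrow between them points. *)

Set Implicit Arguments.
Unset Strict Implicit.

Section Profiles.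
Variables (n : nat) (X : 'I_n -> finType).
Implicit Types (x y : profile n X) (i t : 'I_n).

Lemma upd_in y i s : upd y i s i = s.
Proof. by rewrite /upd ffunE dfwith_in. Qed.

Lemma upd_out y i s j : i != j -> upd y i s j = y j.
Proof. by move=> ij; rewrite /upd ffunE dfwith_out. Qed.

Lemma upd_self y i : upd y i (y i) = y.
Proof.
apply/ffunP => j; case: (eqVneq i j) => [<-|ij]; first by rewrite upd_in.
by rewrite upd_out.
Qed.

Lemma upd_eq i y y' s : ~ differ_off i y y' -> upd y i s = upd y' i s.
Proof.
move=> Hd; apply/ffunP => j; case: (eqVneq i j) => [<-|ij]; first by rewrite !upd_in.
rewrite !upd_out //; apply/eqP/negP => yj; apply: Hd.
by exists j; split; [rewrite eq_sym | exact/negP].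
Qed.

Lemma diffsC x y : [set i | x i != y i] = [set i | y i != x i].
Proof. by apply/setP => i; rewrite !inE eq_sym. Qed.

Lemma diffs_upd x y t : [set i | x i != upd y t (x t) i] = [set i | x i != y i] :\ t.
Proof.
apply/setP => i; rewrite !inE; case: (eqVneq i t) => [->|it]; first by rewrite upd_in eqxx.
by rewrite upd_out // eq_sym.
Qed.

End Profiles.

Section Direction.
Variables (n : nat) (X : 'I_n -> finType) (A : finType) (g : profile n X -> A).
Hypothesis Hwtt : WTT g.
Hypothesis Hns : no_sink g.
Hypothesis Hdiff : distinct_hyperplanes_differ g.
Variable t : 'I_n.
Local Notation G y j := (g (upd y t j)).

Lemma wtt_separators (j l : X t) (u v : profile n X) :
  G u j != G u l -> G v j != G v l -> G u j = G v j \/ G u l = G v l.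
Proof.
move=> Hu Hv; case: (eqVneq j l) => [jl|jl]; first by rewrite jl eqxx in Hu.
case: (classic (differ_off t u v)) => [Hd|Hd]; last by left; rewrite (upd_eq _ Hd).
case: (Hwtt jl Hd) => [|[E|[E|E]]]; first by left.
- by rewrite E eqxx in Hu.
- by right; rewrite E.
- by rewrite E eqxx in Hv.
Qed.

Lemma separators_of_no_arrow (m j : X t) :
  m != j -> ~ (exists d, arrow g t m j d) ->
  exists y1 y2, [/\ G y1 m != G y1 j, G y2 m != G y2 j & G y1 m != G y2 m].
Proof.
move=> mj Hna; have [y1 H1] := Hdiff mj.
apply: NNPP => Hc; apply: Hna; exists (G y1 m) => y2 H2.
apply: NNPP => Hne; apply: Hc; exists y1, y2; split=> //.
by apply/eqP => /esym.
Qed.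

Lemma arrow_dichotomy (j l : X t) :
  j != l -> (exists c, arrow g t j l c) \/ (exists d, arrow g t l j d).
Proof.
move=> jl; case: (classic (exists c, arrow g t j l c)) => [|Hnj]; [by left | right].
have [y1 [y2 [H1 H2 H12]]] := separators_of_no_arrow jl Hnj.
have E12 : G y1 l = G y2 l.
  by case: (wtt_separators H1 H2) => // E; rewrite E eqxx in H12.
exists (G y1 l) => z; rewrite eq_sym => Hz.
case: (wtt_separators Hz H1) => [E1|//].
case: (wtt_separators Hz H2) => [E2|E2]; last by rewrite E12.
by rewrite -E1 E2 eqxx in H12.
Qed.

Lemma proper_outcome_exists (j : X t) : exists p, proper_outcome g t j p.
Proof.
have [m [mj Hnmj]] : exists m, m != j /\ ~ (exists c, arrow g t m j c).
  apply: NNPP => H; apply: (Hns (j := j)) => m mj.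
  by apply: NNPP => Hm; apply: H; exists m.
have jm : j != m by rewrite eq_sym.
by case: (arrow_dichotomy jm) => [[c Hc]|//]; exists c, m; split=> //; split.
Qed.

Lemma separator_value (j l m : X t) b p :
  arrow g t j l b -> arrow g t j m p -> b != p ->
  forall y, G y m != G y j -> G y l = p.
Proof.
move=> Hjl Hjm bp y Hy; have Hyj : G y j = p by apply: Hjm; rewrite eq_sym.
case: (eqVneq (G y j) (G y l)) => [<- //|Hjl'].
by move: bp; rewrite -Hyj (Hjl y Hjl') eqxx.
Qed.

Lemma arrow_rev_proper (j l m : X t) b p :
  m != j -> arrow g t j l b -> darrow g t j m p -> b != p -> arrow g t l j p.
Proof.
move=> mj Hjl [Hjm Hnmj] bp z Hz.
have Hzj : G z j = b by apply: Hjl; rewrite eq_sym.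
have Fj y : G y m != G y j -> G y j = p by move=> Hy; apply: Hjm; rewrite eq_sym.
have Fl := separator_value Hjl Hjm bp.
have Hzm : G z m = b.
  case: (eqVneq (G z j) (G z m)) => [<- //|Hjm'].
  by move: bp; rewrite -Hzj (Hjm z Hjm') eqxx.
have Hzlm : G z l != G z m by rewrite Hzm -Hzj.
have either y : G y m != G y j -> G z l = p \/ G y m = b.
  move=> Hy; have Hylm : G y l != G y m by rewrite (Fl y Hy) -(Fj y Hy) eq_sym.
  case: (wtt_separators Hzlm Hylm) => E; first by left; rewrite E (Fl y Hy).
  by right; rewrite -E.
have [y1 [y2 [H1 H2 H12]]] := separators_of_no_arrow mj Hnmj.
case: (either y1 H1) => [//|E1]; case: (either y2 H2) => [//|E2].
by rewrite E1 E2 eqxx in H12.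
Qed.

Lemma not_arrow_of_improper (Y Z : profile n X) c :
  G Y (Z t) != g Y -> G Z (Y t) != g Z ->
  ~ proper_outcome g t (Y t) (g Y) -> ~ proper_outcome g t (Z t) (g Z) ->
  ~ arrow g t (Y t) (Z t) c.
Proof.
move=> HY HZ Hpj Hpl Hjl.
have gY : G Y (Y t) = g Y by rewrite upd_self.
have gZ : G Z (Z t) = g Z by rewrite upd_self.
have {}Hjl : arrow g t (Y t) (Z t) (g Y).
  have E : G Y (Y t) = c by apply: Hjl; rewrite gY eq_sym.
  by rewrite -gY E.
have [p [m [mj [Hjm Hnmj]]]] := proper_outcome_exists (Y t).
have bp : g Y != p.
  by apply/eqP => E; apply: Hpj; exists m; rewrite E; split=> //; split.
have Hlj := arrow_rev_proper mj Hjl (conj Hjm Hnmj) bp.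
have ap : g Z = p by rewrite -gZ; apply: Hlj; rewrite gZ eq_sym.
have Fj y : G y m != G y (Y t) -> G y (Y t) = p.
  by move=> Hy; apply: Hjm; rewrite eq_sym.
have Fl := separator_value Hjl Hjm bp.
have sep_lm y : G y m != G y (Y t) -> G y (Z t) != G y m.
  by move=> Hy; rewrite (Fl y Hy) -(Fj y Hy) eq_sym.
have [y1 [y2 [H1 H2 H12]]] := separators_of_no_arrow mj Hnmj.
have Hnml : ~ (exists d, arrow g t m (Z t) d).
  move=> [d Hd]; have Dm y : G y m != G y (Y t) -> G y m = d.
    by move=> Hy; apply: Hd; rewrite eq_sym; apply: sep_lm.
  by rewrite (Dm _ H1) (Dm _ H2) eqxx in H12.
have lm : Z t != m.
  by apply/eqP => E; apply: Hnml; exists (g Y) => y; rewrite E eqxx.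
have [c' Hlm] : exists c', arrow g t (Z t) m c'.
  by case: (arrow_dichotomy lm) => // /Hnml.
have cp : c' = p by rewrite -(Fl y1 H1) (Hlm y1 (sep_lm y1 H1)).
apply: Hpl; exists m; split; first by rewrite eq_sym.
by rewrite ap -cp; split.
Qed.

End Direction.

Section Boxes.
Variables (n : nat) (X : 'I_n -> finType) (A : finType) (g : profile n X -> A).
Hypothesis Hwtt : WTT g.
Hypothesis Hns : no_sink g.
Hypothesis Hdiff : distinct_hyperplanes_differ g.

Definition box (x y : profile n X) : Prop :=
  g x != g y /\
  forall i, x i != y i ->
    ~ proper_outcome g i (x i) (g x) /\ ~ proper_outcome g i (y i) (g y).

Lemma box_sym x y : box x y -> box y x.
Proof.
move=> [Hg Hb]; split=> [|i]; first by rewrite eq_sym.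
by rewrite eq_sym => /Hb [].
Qed.

Lemma box_shrink x y t : box x y -> g (upd y t (x t)) = g y -> box x (upd y t (x t)).
Proof.
move=> [Hg Hb] E; rewrite /box E; split=> // i.
case: (eqVneq t i) => [<-|ti]; first by rewrite upd_in eqxx.
by rewrite upd_out //; apply: Hb.
Qed.

Lemma not_box x y : ~ box x y.
Proof.
have [N] := ubnP #|[set i | x i != y i]|.
elim: N x y => // N IH x y Hcard Hbox; have [Hg Hb] := Hbox.
have [t xt] : exists t, x t != y t.
  case: (pickP (fun i => x i != y i)) => [t xt|same]; first by exists t.
  by move: Hg; rewrite (_ : x = y) ?eqxx //; apply/ffunP => i; exact/eqP/negbFE/same.
have smaller : #|[set i | x i != y i] :\ t| < N.
  by move: Hcard; rewrite (cardsD1 t) inE xt add1n ltnS.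
have Hv : g (upd y t (x t)) != g y.
  apply/eqP => E; apply: (IH x (upd y t (x t))) (box_shrink Hbox E).
  by rewrite diffs_upd.
have Hw : g (upd x t (y t)) != g x.
  apply/eqP => E; apply: (IH y (upd x t (y t))) (box_shrink (box_sym Hbox) E).
  by rewrite diffs_upd -diffsC.
have [Hx Hy] := Hb t xt.
have yx : y t != x t by rewrite eq_sym.
case: (arrow_dichotomy Hwtt Hdiff yx) => [[e He]|[e He]].
- exact: (not_arrow_of_improper Hwtt Hns Hdiff Hv Hw Hy Hx He).
- exact: (not_arrow_of_improper Hwtt Hns Hdiff Hw Hv Hx Hy He).
Qed.

End Boxes.

Theorem mainTheorem8 (n : nat) (X : 'I_n -> finType) (A : finType)
  (g : profile n X -> A)
  (HX : forall i : 'I_n, 0 < #|X i|) (HA : 0 < #|A|)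
  (Hwtt : WTT g) (Hns : no_sink g)
  (Hnc : no_constant_hyperplane g) (Hdiff : distinct_hyperplanes_differ g)
  (k : nat) (Hk1 : 1 <= k) (Hkn : k <= n) :
  ~ contains_box g k.
Proof.
move=> [x [y [Hg [_ Hb]]]].
exact: (not_box Hwtt Hns Hdiff (conj Hg Hb)).
Qed.
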